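(* For every decorated tree $\mathcal{T}$, the set $\mathrm{Cent}(\mathcal{T})$ of central elements of $\mathcal{T}$ is connected.
   Context: A graph is a pair $(X_0,X_1)$ of finite sets such that each element of $X_1$ (an edge) is a $2$-element subset of $X_0$; elements of $X_0$ are cells. A path is a tuple $(x_0,\dots,x_n)$ ($n\ge0$) of cells with $\{x_i,x_{i+1}\}$ an edge for each $i<n$, these edges pairwise distinct; a cell/edge is in the path if it is some $x_i$ / some $\{x_i,x_{i+1}\}$. The graph is a tree if any two cells $x,y$ are joined by a unique path $\gamma_{x,y}$. A decorated tree is $(V,A,E,f,q)$ with $V$ (vertices), $A$ (arrows) finite disjoint sets, $(V\cup A,E)$ a tree, every arrow contained in exactly one edge, $f:A\to\mathbb{Z}$, $q(e,x)\in\mathbb{Z}$ for each $e\in E$, $x\in e$, with $q(e,\alpha)=1$ for $\alpha\in A$, and for each $v\in V$ and distinct edges $e,e'\ni v$, $\gcd(q(e,v),q(e',v))=1$. A path $(w_1,\dots,w_m)$ with $m\ge2$ satisfies $(+)$ if every edge $e\ni w_m$ other than $\{w_{m-1},w_m\}$ has $q(e,w_m)\ge1$ and at most one such edge has $q(e,w_m)>1$. An element $x\in V\cup A$ is central if $\gamma_{x,v}$ satisfies $(+)$ for every $v\in V\setminus\{x\}$; $\mathrm{Cent}(\mathcal{T})$ is the set of central elements. A subset $S\subseteq V\cup A$ is connected if every path $(x_0,\dots,x_n)$ with $x_0,x_n\in S$ has $x_i\in S$ for all $0<i<n$. *)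

From mathcomp Require Import all_boot all_order all_algebra.
Set Implicit Arguments. Unset Strict Implicit. Unset Printing Implicit Defensive.
Import GRing.Theory Num.Theory.

(* Cells are the elements of a finite type T; the vertex set is V : {set T}
   and the arrow set is its complement ~: V (so V, A are disjoint and
   V u A = X_0 = all cells). *)

Section Decorated.
Variable T : finType.

Definition is_graph (E : {set {set T}}) : Prop :=
  forall e, e \in E -> #|e| = 2.

Definition path_edges (s : seq T) : seq {set T} :=
  [seq [set p.1; p.2] | p <- zip s (behead s)].

Definition is_path (E : {set {set T}}) (s : seq T) : Prop :=
  (0 < size s)%N /\ (forall e, e \in path_edges s -> e \in E)
  /\ uniq (path_edges s).

Definition path_from_to (E : {set {set T}}) (x y : T) (s : seq T) : Prop :=
  is_path E s /\ head x s = x /\ last x s = y.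

Definition is_tree (E : {set {set T}}) : Prop :=
  is_graph E /\ forall x y : T, exists! s, path_from_to E x y s.

Definition decorated_tree (V : {set T}) (E : {set {set T}})
    (f : T -> int) (q : {set T} -> T -> int) : Prop :=
  is_tree E /\
  (forall a, a \notin V -> #|[set e in E | a \in e]| = 1%N) /\
  (forall e a, e \in E -> a \in e -> a \notin V -> q e a = 1%R) /\
  (forall v e e', v \in V -> e \in E -> e' \in E -> v \in e -> v \in e' ->
       e != e' -> gcdz (q e v) (q e' v) = 1%N).

Definition plus_cond (E : {set {set T}}) (q : {set T} -> T -> int)
    (s : seq T) : Prop :=
  match rev s with
  | wm :: wm1 :: _ =>
      (forall e, e \in E -> wm \in e -> e != [set wm1; wm] -> (1 <= q e wm)%R) /\
      (forall e e', e \in E -> e' \in E -> wm \in e -> wm \in e' ->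
         e != [set wm1; wm] -> e' != [set wm1; wm] ->
         (1 < q e wm)%R -> (1 < q e' wm)%R -> e = e')
  | _ => False
  end.

(* x is central: gamma_{x,v} satisfies (+) for every v in V \ {x};
   in a tree gamma_{x,v} is the unique path from x to v. *)
Definition central (V : {set T}) (E : {set {set T}})
    (q : {set T} -> T -> int) (x : T) : Prop :=
  forall v, v \in V -> v != x ->
    forall s, path_from_to E x v s -> plus_cond E q s.

Definition connected_cells (E : {set {set T}}) (S : T -> Prop) : Prop :=
  forall x y s, path_from_to E x y s -> S x -> S y ->
    forall z, z \in s -> S z.

End Decorated.

From mathcomp Require Import all_boot all_order all_algebra.
Set Implicit Arguments. Unset Strict Implicit.

(* Let x, y be central and z a cell of the path from x to y, and let v be a
   vertex other than z. Following the path from x to v and then the path from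
   v back to y gives a walk from x to y; in a tree the path from x to y is
   obtained from any such walk by removing loops, so z lies on the path from x
   to v or on the path from y to v. Say on the former: then the path from z to
   v is a final segment of the path from x to v, and since condition (+) only
   looks at the last two cells of a path, it inherits (+). *)

Section PathEdges.
Variable T : finType.
Implicit Types (a b x : T) (s : seq T).

Lemma path_edges_cons2 a b s :
  path_edges (a :: b :: s) = [set a; b] :: path_edges (b :: s).
Proof. by []. Qed.

Lemma mem_path_edges s e x : e \in path_edges s -> x \in e -> x \in s.
Proof.
elim: s => [|a [|b s] IHs] //; rewrite path_edges_cons2 inE.
case/orP=> [/eqP-> | /IHs x_bs /x_bs]; last by move=> x_in; rewrite in_cons x_in orbT.
by rewrite !inE => /orP[]->; rewrite ?orbT.
Qed.

Lemma uniq_path_edges s : uniq s -> uniq (path_edges s).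
Proof.
elim: s => [|a [|b s] IHs] //; rewrite path_edges_cons2 /= => /andP[a_notin uniq_s].
rewrite IHs // andbT; apply/negP => /(mem_path_edges (x := a)).
by rewrite !inE eqxx => /(_ isT); apply/negP.
Qed.

Lemma path_edges_cat_cons s1 x s2 :
  path_edges (s1 ++ x :: s2) = path_edges (rcons s1 x) ++ path_edges (x :: s2).
Proof.
elim: s1 => [|a [|b s1] IHs1] //.
by rewrite cat_cons rcons_cons !path_edges_cons2 IHs1.
Qed.

End PathEdges.

Section TreePaths.
Variable T : finType.
Variable E : {set {set T}}.
Implicit Types (x y v z : T) (p s : seq T).

Definition adjacent : rel T := fun a b => [set a; b] \in E.

Lemma path_edges_subsetP x p :
  reflect (forall e, e \in path_edges (x :: p) -> e \in E) (path adjacent x p).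
Proof.
elim: p x => [|y p IHp] x /=; first by left.
rewrite path_edges_cons2; apply: (iffP andP) => [[xy /IHp p_E] e | p_E].
  by rewrite inE => /orP[/eqP-> | /p_E].
split; first by apply: p_E; rewrite mem_head.
by apply/IHp => e e_p; apply: p_E; rewrite inE e_p orbT.
Qed.

Lemma path_from_toP x y s :
  path_from_to E x y s -> exists2 p, s = x :: p & path adjacent x p && (last x p == y).
Proof.
case: s => [[[]] // | a p] [[_ [p_E _]] [/= <- <-]].
by exists p => //; rewrite eqxx andbT; apply/path_edges_subsetP.
Qed.

Lemma path_from_to_refl x : path_from_to E x x [:: x].
Proof. by []. Qed.

Lemma path_from_to_suffix x v s1 z s2 :
  path_from_to E x v (s1 ++ z :: s2) -> path_from_to E z v (z :: s2).
Proof.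
rewrite /path_from_to /is_path path_edges_cat_cons last_cat => -[[_ [s_E]]].
rewrite cat_uniq => /and3P[_ _ uniq_s2] [_ last_s].
by do !split=> //; move=> e e_s2; apply: s_E; rewrite mem_cat e_s2 orbT.
Qed.

Lemma plus_cond_suffix (q : {set T} -> T -> int) s1 s2 :
  (1 < size s2)%N -> plus_cond E q (s1 ++ s2) -> plus_cond E q s2.
Proof. by rewrite -size_rev /plus_cond rev_cat; case: (rev s2) => [|a [|b l]]. Qed.

Hypothesis tree_E : is_tree E.

Lemma tree_path_unique x y s1 s2 :
  path_from_to E x y s1 -> path_from_to E x y s2 -> s1 = s2.
Proof.
have [s [_ s_unique]] := tree_E.2 x y.
by move=> /s_unique <- /s_unique <-.
Qed.

Lemma tree_path_sub_walk x p s :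
  path adjacent x p -> path_from_to E x (last x p) s -> {subset s <= x :: p}.
Proof.
move=> walk_p; case: (shortenP walk_p) => p' path_p' uniq_p' sub_p' s_xy.
have p'_xy : path_from_to E x (last x p') (x :: p').
  by do !split=> //; [apply/path_edges_subsetP | apply: uniq_path_edges].
rewrite (tree_path_unique s_xy p'_xy) => z.
by rewrite !inE => /orP[-> | /sub_p' ->]; rewrite ?orbT.
Qed.

Lemma mem_tree_path_via x y v s gx gy z :
  path_from_to E x y s -> path_from_to E x v gx -> path_from_to E y v gy ->
  z \in s -> (z \in gx) || (z \in gy).
Proof.
move=> s_xy /path_from_toP[px -> /andP[walk_px /eqP last_px]].
move=> /path_from_toP[py -> /andP[walk_py /eqP last_py]].
have walk_xy : path adjacent x (px ++ rev (belast y py)).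
  rewrite cat_path walk_px last_px -last_py rev_path.
  by rewrite (@eq_path _ _ adjacent) // => a b; rewrite /adjacent setUC.
have last_xy : last x (px ++ rev (belast y py)) = y.
  rewrite last_cat last_px -last_py.
  by case: (py) => //= b py'; rewrite rev_cons last_rcons.
rewrite -last_xy in s_xy; move/(tree_path_sub_walk walk_xy s_xy).
rewrite inE mem_cat mem_rev => /or3P[/eqP-> | z_px | /mem_belast z_py].
- by rewrite mem_head.
- by rewrite inE z_px orbT.
- by rewrite z_py orbT.
Qed.

Lemma central_on_path (V : {set T}) (q : {set T} -> T -> int) x v gx z t :
  central V E q x -> path_from_to E x v gx -> v \in V -> v != z -> z \in gx ->
  path_from_to E z v t -> plus_cond E q t.
Proof.
move=> x_central gx_xv v_V v_neq_z z_gx t_zv.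
have v_neq_x : v != x.
  apply: contra_neq v_neq_z => v_eq_x.
  have gx_x : gx = [:: x].
    by apply: tree_path_unique gx_xv _; rewrite v_eq_x; apply: path_from_to_refl.
  by move: z_gx; rewrite gx_x inE => /eqP->.
move: (x_central v v_V v_neq_x gx gx_xv) t_zv.
case/splitPr: z_gx gx_xv => s1 s2 /path_from_to_suffix t'_zv plus_gx t_zv.
rewrite (tree_path_unique t_zv t'_zv); apply: plus_cond_suffix plus_gx.
case: t'_zv => _ [_]; case: s2 => [|? ?] //= last_z.
by move: v_neq_z; rewrite -last_z eqxx.
Qed.

End TreePaths.

Theorem lemma5p3 (T : finType) (V : {set T}) (E : {set {set T}})
    (f : T -> int) (q : {set T} -> T -> int) :
  decorated_tree V E f q ->
  connected_cells E (central V E q).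
Proof.
move=> [tree_E _] x y s s_xy x_central y_central z z_s v v_V v_neq_z t t_zv.
have [gx [gx_xv _]] := tree_E.2 x v.
have [gy [gy_yv _]] := tree_E.2 y v.
case/orP: (mem_tree_path_via tree_E s_xy gx_xv gy_yv z_s) => [z_gx | z_gy].
- exact: central_on_path x_central gx_xv v_V v_neq_z z_gx t_zv.
- exact: central_on_path y_central gy_yv v_V v_neq_z z_gy t_zv.
Qed.
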